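(* Let $f:\mathbb{R}^{2}\to\mathbb{R}$ be smooth and normal. Then for all $x,y\in\mathbb{R}$ and all $k_{1}\neq0$, $k_{2}\neq0$, the limits $F(k_{1},y)=\lim_{r\to\infty}\int_{-r}^{r}f(x,y)e^{-ik_{1}x}\,dx$ and $G(x,k_{2})=\lim_{r\to\infty}\int_{-r}^{r}f(x,y)e^{-ik_{2}y}\,dy$ both exist, and $y\mapsto F(k_{1},y)$ and $x\mapsto G(x,k_{2})$ are of moderate decrease (i.e. bounded by $\frac{D}{|y|^{2}}$, resp. $\frac{D}{|x|^{2}}$, for $|y|>1$, resp. $|x|>1$, for some constant $D>0$).
   Context: One-variable notions: a smooth $g:\mathbb{R}\setminus V\to\mathbb{R}$, $V\subset\mathbb{R}$ bounded closed, is analytic at infinity if there exist $\epsilon_{1},\epsilon_{2}>0$ such that $g(1/t)=\sum_{n\geq1}a_{n}t^{n}$ for $0<t<\epsilon_{1}$ and $g(1/t)=\sum_{n\geq1}b_{n}t^{n}$ for $-\epsilon_{2}<t<0$, with real coefficients and both power series absolutely convergent on the respective intervals. Two-variable notions: let $f:\mathbb{R}^{2}\setminus W\to\mathbb{R}$ be smooth with $W$ closed and bounded (here $W=\emptyset$). $f$ is of very moderate decrease if there is $C>0$ with $|f(x,y)|\leq\frac{C}{|(x,y)|}$ for $|(x,y)|>1$, and of moderate decrease if $|f(x,y)|\leq\frac{C}{|(x,y)|^{2}}$ for $|(x,y)|>1$. For fixed $x$ write $f_{x}(y)=f(x,y)$ and for fixed $y$ write $f_{y}(x)=f(x,y)$.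 $f$ is normal if: (i) for every $x$, $f_{x}$ is analytic at infinity; (ii) for every $y$, $f_{y}$ is analytic at infinity; (iii) $f$ is of very moderate decrease; (iv) $\frac{\partial f}{\partial x}$ and $\frac{\partial f}{\partial y}$ are of moderate decrease; (v) there is a uniform bound on the number of zeros of $f_{x},(f_{x})',(f_{x})''$ and of $f_{y},(f_{y})',(f_{y})''$. *)

From Stdlib Require Import Reals Lra List.
From Coquelicot Require Import Coquelicot.
Open Scope R_scope.

(* C^infinity on R^2: f belongs to some family of jointly continuous
   functions closed under both partial derivatives (all partials exist). *)
Definition smooth2 (f : R -> R -> R) : Prop :=
  exists S : (R -> R -> R) -> Prop, S f /\
    forall g, S g ->
      (forall x y, continuous (fun p : R * R => g (fst p) (snd p)) (x, y)) /\
      (forall x y, ex_derive (fun t => g t y) x) /\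
      (forall x y, ex_derive (fun t => g x t) y) /\
      S (fun x y => Derive (fun t => g t y) x) /\
      S (fun x y => Derive (fun t => g x t) y).

Definition series_rep_on (g : R -> R) (a : nat -> R) (P : R -> Prop) : Prop :=
  forall t, P t ->
    ex_series (fun n => Rabs (a n * t ^ n)) /\
    g (1 / t) = Series (fun n => a n * t ^ n).

Definition analytic_at_infinity (g : R -> R) : Prop :=
  exists (eps1 eps2 : R) (a b : nat -> R),
    0 < eps1 /\ 0 < eps2 /\ a 0%nat = 0 /\ b 0%nat = 0 /\
    series_rep_on g a (fun t => 0 < t < eps1) /\
    series_rep_on g b (fun t => - eps2 < t < 0).

Definition norm2 (x y : R) : R := sqrt (x ^ 2 + y ^ 2).

Definition very_moderate_decrease2 (f : R -> R -> R) : Prop :=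
  exists C, 0 < C /\ forall x y, norm2 x y > 1 -> Rabs (f x y) <= C / norm2 x y.

Definition moderate_decrease2 (f : R -> R -> R) : Prop :=
  exists C, 0 < C /\ forall x y, norm2 x y > 1 -> Rabs (f x y) <= C / (norm2 x y) ^ 2.

Definition partial_x (f : R -> R -> R) : R -> R -> R :=
  fun x y => Derive (fun t => f t y) x.
Definition partial_y (f : R -> R -> R) : R -> R -> R :=
  fun x y => Derive (fun t => f x t) y.

Definition at_most_zeros (N : nat) (g : R -> R) : Prop :=
  forall l : list R, NoDup l -> (forall z, In z l -> g z = 0) -> (length l <= N)%nat.

Definition normal (f : R -> R -> R) : Prop :=
  (forall x, analytic_at_infinity (fun y => f x y)) /\
  (forall y, analytic_at_infinity (fun x => f x y)) /\
  very_moderate_decrease2 f /\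
  moderate_decrease2 (partial_x f) /\ moderate_decrease2 (partial_y f) /\
  (exists N : nat,
     (forall x, at_most_zeros N (fun y => f x y) /\
                at_most_zeros N (Derive (fun y => f x y)) /\
                at_most_zeros N (Derive_n (fun y => f x y) 2)) /\
     (forall y, at_most_zeros N (fun x => f x y) /\
                at_most_zeros N (Derive (fun x => f x y)) /\
                at_most_zeros N (Derive_n (fun x => f x y) 2))).

Definition expmi (k t : R) : C := (cos (k * t), - sin (k * t)).

Definition fourier_trunc (g : R -> R) (k r : R) : C :=
  @RInt C_R_CompleteNormedModule (fun t => (g t : C) * expmi k t)%C (- r) r.

Definition fourier_lim (g : R -> R) (k : R) (L : C) : Prop :=
  filterlim (fourier_trunc g k) (Rbar_locally p_infty) (locally (T := C_R_NormedModule) L).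

From Stdlib Require Import Reals Lra Lia List Classical Wf_nat.
From Coquelicot Require Import Coquelicot.
Open Scope R_scope.

(* Fix y and put g := f(., y).  Integrating by parts twice against e^{-ikx},
     k^2 int_a^b g e^{-ikx} = [boundary terms in g and g'] - int_a^b g'' e^{-ikx},
   and since g'' has at most N zeros, g' is monotone on at most N + 1 pieces of [a, b],
   so int_a^b |g''| <= 2 (N + 1) sup_[a,b] |g'|.  Far from the origin g and g' are
   O(1/|x|), which makes the truncated integrals Cauchy as r -> oo.  Moderate decrease
   of df/dx also bounds |g'| by C/y^2 everywhere, while the boundary terms in g vanish
   as r -> oo, so the limit is O(1/y^2).  Exchanging the variables gives the statement
   in y. *)

Lemma Cmod_le_Rabs_plus (a b : R) : Cmod (a, b) <= Rabs a + Rabs b.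
Proof.
  unfold Cmod; simpl.
  pose proof (Rabs_pos a); pose proof (Rabs_pos b).
  rewrite <- (sqrt_pow2 (Rabs a + Rabs b)) by lra.
  apply sqrt_le_1_alt.
  pose proof (pow2_abs a); pose proof (pow2_abs b); simpl in *; nra.
Qed.

Lemma norm_C_R (z : C) : @norm R_AbsRing C_R_NormedModule z = Cmod z.
Proof.
  destruct z as [a b]; unfold norm; simpl; unfold prod_norm, Cmod; simpl.
  change (norm a) with (Rabs a); change (norm b) with (Rabs b).
  rewrite !Rmult_1_r, <- !Rabs_mult, !Rabs_right by nra.
  reflexivity.
Qed.

Lemma at_most_zeros_list (N : nat) (h : R -> R) : at_most_zeros N h ->
  exists l : list R, (length l <= N)%nat /\ forall z, h z = 0 -> In z l.
Proof.
  intros HN; apply NNPP; intros Hno.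
  assert (Hgrow : forall n, exists l, NoDup l /\ (forall z, In z l -> h z = 0) /\ length l = n).
  { induction n as [|n [l [Hl [Hz Hlen]]]].
    - exists nil; repeat split; [constructor | intros z []].
    - assert (exists z, h z = 0 /\ ~ In z l) as [z [Hz0 Hzl]].
      { apply NNPP; intros Hall; apply Hno; exists l; split.
        + now apply HN.
        + intros z Hz0; apply NNPP; intros Hzl; apply Hall; now exists z. }
      exists (z :: l); repeat split.
      + now constructor.
      + intros w [<- | Hw]; auto.
      + simpl; lia. }
  destruct (Hgrow (S N)) as [l [Hl [Hz Hlen]]].
  specialize (HN l Hl Hz); lia.
Qed.

Lemma Rdiv_le_contravar (A u w : R) : 0 <= A -> 0 < u -> u <= w -> A / w <= A / u.
Proof. intros HA Hu Huw; apply Rmult_le_compat_l; [exact HA | now apply Rinv_le_contravar]. Qed.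

Lemma Rdiv_lt_of_abs_div_lt (A eps r : R) : 0 < eps -> Rabs A / eps < r -> A / r < eps.
Proof.
  intros Heps Hr.
  assert (Hr0 : 0 < r) by (pose proof (Rdiv_le_0_compat _ _ (Rabs_pos A) Heps); lra).
  apply Rlt_div_l; [exact Hr0|].
  apply Rlt_div_l in Hr; [|exact Heps].
  pose proof (Rle_abs A); nra.
Qed.

Lemma ex_lim_p_infty_of_tail_bound {V : CompleteNormedModule R_AbsRing} (I : R -> V) (R0 A : R) :
  (forall u v, R0 < u -> u <= v -> norm (minus (I v) (I u)) <= A / u) ->
  exists L, filterlim I (Rbar_locally p_infty) (locally L).
Proof.
  intros HI; apply (proj1 (filterlim_locally_cauchy I)); intros eps.
  exists (fun u => Rmax R0 (Rabs A / eps) < u); split; [now exists (Rmax R0 (Rabs A / eps))|].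
  assert (Hsmall : forall u v, Rmax R0 (Rabs A / eps) < u -> u <= v -> ball (I u) eps (I v)).
  { intros u v Hu Huv; apply (norm_compat1 (V := V)).
    eapply Rle_lt_trans; [apply HI; [|exact Huv] |].
    - eapply Rle_lt_trans; [apply Rmax_l | exact Hu].
    - apply Rdiv_lt_of_abs_div_lt; [apply cond_pos|].
      eapply Rle_lt_trans; [apply Rmax_r | exact Hu]. }
  intros u v Hu Hv; destruct (Rle_lt_dec u v) as [Huv | Hvu].
  - now apply Hsmall.
  - apply ball_sym, Hsmall; [exact Hv | lra].
Qed.

Lemma norm_lim_p_infty_le {V : NormedModule R_AbsRing} (I : R -> V) (L : V) (R0 A B : R) :
  filterlim I (Rbar_locally p_infty) (locally L) ->
  (forall r, R0 < r -> norm (I r) <= A / r + B) -> norm L <= B.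
Proof.
  intros HL HI; apply Rle_plus_epsilon; intros eps Heps.
  apply (closed_filterlim_loc I (fun z => norm z <= B + eps) L HL).
  - exists (Rmax R0 (Rabs A / eps)); intros r Hr.
    assert (A / r < eps).
    { apply Rdiv_lt_of_abs_div_lt; [exact Heps|].
      eapply Rle_lt_trans; [apply Rmax_r | exact Hr]. }
    assert (HR0 : R0 < r) by (eapply Rle_lt_trans; [apply Rmax_l | exact Hr]).
    specialize (HI r HR0); lra.
  - apply (closed_comp norm (fun x => x <= B + eps));
      [intros; apply filterlim_norm | apply closed_le].
Qed.

Lemma ex_RInt_R_continuous (f : R -> R) (a b : R) :
  (forall x, continuous f x) -> ex_RInt f a b.
Proof. intros Hf; apply (ex_RInt_continuous (V := R_CompleteNormedModule)); auto. Qed.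

Lemma continuous_Rabs_comp (f : R -> R) (x : R) :
  continuous f x -> continuous (fun t => Rabs (f t)) x.
Proof. intros Hf; apply (continuous_comp f Rabs); [exact Hf | apply continuous_Rabs]. Qed.

Lemma continuous_no_zero_sign (h : R -> R) (a b : R) :
  (forall x, continuous h x) -> (forall z, a < z < b -> h z <> 0) ->
  (forall z, a < z < b -> 0 < h z) \/ (forall z, a < z < b -> h z < 0).
Proof.
  intros Hc Hz.
  destruct (classic (exists p, a < p < b /\ h p < 0)) as [[p [Hp Hp0]] | Hnone].
  - right; intros q Hq.
    destruct (Rlt_le_dec (h q) 0) as [Hq0 | Hq0]; [exact Hq0 | exfalso].
    destruct (IVT_gen_consistent h p q 0 Hc) as [z [Hzpq Hz0]].
    + split.
      * apply Rle_trans with (h p); [apply Rmin_l | lra].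
      * apply Rle_trans with (h q); [lra | apply Rmax_r].
    + apply (Hz z); [|exact Hz0].
      assert (a < Rmin p q) by (apply Rmin_glb_lt; lra).
      assert (Rmax p q < b) by (apply Rmax_lub_lt; lra).
      lra.
  - left; intros q Hq.
    destruct (Rlt_le_dec 0 (h q)) as [Hq0 | Hq0]; [exact Hq0 | exfalso].
    apply Hnone; exists q; split; [exact Hq|].
    pose proof (Hz q Hq); lra.
Qed.

Lemma RInt_abs_Derive_no_zero (g : R -> R) (a b : R) : a <= b ->
  (forall x, ex_derive g x) -> (forall x, continuous (Derive g) x) ->
  (forall z, a < z < b -> Derive g z <> 0) ->
  RInt (fun t => Rabs (Derive g t)) a b = Rabs (g b - g a).
Proof.
  intros Hab Hd Hc Hz.
  assert (Hint : ex_RInt (Derive g) a b) by now apply ex_RInt_R_continuous.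
  rewrite <- (RInt_Derive g a b) by auto.
  destruct (continuous_no_zero_sign _ a b Hc Hz) as [Hpos | Hneg].
  - assert (Habs : RInt (fun t => Rabs (Derive g t)) a b = RInt (Derive g) a b).
    { apply RInt_ext; intros x Hx; rewrite Rmin_left, Rmax_right in Hx by lra.
      apply Rabs_right; left; now apply Hpos. }
    rewrite Habs, Rabs_right; [reflexivity|].
    apply Rle_ge, RInt_ge_0; [exact Hab | exact Hint |].
    intros x Hx; left; now apply Hpos.
  - assert (Habs : RInt (fun t => Rabs (Derive g t)) a b = - RInt (Derive g) a b).
    { rewrite <- (RInt_opp (V := R_CompleteNormedModule) (Derive g)) by exact Hint.
      apply RInt_ext; intros x Hx; rewrite Rmin_left, Rmax_right in Hx by lra.
      apply Rabs_left; now apply Hneg. }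
    rewrite Habs, Rabs_left1; [reflexivity|].
    assert (0 <= - RInt (Derive g) a b); [|lra].
    rewrite <- Habs; apply RInt_ge_0; [exact Hab | | intros; apply Rabs_pos].
    apply ex_RInt_R_continuous; intros; now apply continuous_Rabs_comp.
Qed.

Definition below (z : R) (l : list R) : list R :=
  filter (fun t => if Rlt_dec t z then true else false) l.
Definition above (z : R) (l : list R) : list R :=
  filter (fun t => if Rlt_dec z t then true else false) l.

Lemma length_below_above_le (z : R) (l : list R) :
  (length (below z l) + length (above z l) <= length l)%nat.
Proof.
  induction l as [|w l IH]; simpl; [lia|]; unfold below, above in *; simpl.
  destruct (Rlt_dec w z), (Rlt_dec z w); simpl; lra || lia.
Qed.

Lemma length_below_above_lt (z : R) (l : list R) : In z l ->
  (length (below z l) + length (above z l) < length l)%nat.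
Proof.
  induction l as [|w l IH]; simpl; [tauto|]; intros [-> | Hin];
    pose proof (length_below_above_le z l); unfold below, above in *; simpl.
  - destruct (Rlt_dec z z); [lra | simpl; lia].
  - specialize (IH Hin); destruct (Rlt_dec w z), (Rlt_dec z w); simpl; lra || lia.
Qed.

(* Between consecutive zeros of [g'] the function [g] is monotone, so each of the
   at most [length l + 1] pieces contributes at most [2 M] to the total variation. *)
Lemma RInt_abs_Derive_le_zeros (g : R -> R) (M : R) :
  (forall x, ex_derive g x) -> (forall x, continuous (Derive g) x) ->
  forall (l : list R) (a b : R), a <= b ->
  (forall z, a < z < b -> Derive g z = 0 -> In z l) ->
  (forall x, a <= x <= b -> Rabs (g x) <= M) ->
  RInt (fun t => Rabs (Derive g t)) a b <= 2 * (INR (length l) + 1) * M.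
Proof.
  intros Hd Hc l.
  induction l as [l IH] using (well_founded_induction (well_founded_ltof _ (@length R))).
  intros a b Hab Hz HM.
  assert (HM0 : 0 <= M) by (pose proof (Rabs_pos (g a)); pose proof (HM a ltac:(lra)); lra).
  pose proof (pos_INR (length l)).
  destruct (classic (exists z, In z l /\ a < z < b)) as [[z [Hzl Hzab]] | Hnone].
  - pose proof (length_below_above_lt z l Hzl) as Hlen.
    assert (Hint : forall u v, ex_RInt (fun t => Rabs (Derive g t)) u v).
    { intros u v; apply ex_RInt_R_continuous; intros; now apply continuous_Rabs_comp. }
    rewrite <- (RInt_Chasles (V := R_CompleteNormedModule) _ a z b) by apply Hint.
    assert (Ia : RInt (fun t => Rabs (Derive g t)) a z <= 2 * (INR (length (below z l)) + 1) * M).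
    { apply IH; [unfold ltof; lia | lra | | intros; apply HM; lra].
      intros w Hw Hw0; apply filter_In; split; [apply Hz; auto; lra|].
      destruct (Rlt_dec w z); [reflexivity | lra]. }
    assert (Ib : RInt (fun t => Rabs (Derive g t)) z b <= 2 * (INR (length (above z l)) + 1) * M).
    { apply IH; [unfold ltof; lia | lra | | intros; apply HM; lra].
      intros w Hw Hw0; apply filter_In; split; [apply Hz; auto; lra|].
      destruct (Rlt_dec z w); [reflexivity | lra]. }
    assert (Hcount : INR (length (below z l)) + INR (length (above z l)) + 1 <= INR (length l)).
    { rewrite <- plus_INR, <- S_INR; apply le_INR; lia. }
    change (plus ?x ?y) with (x + y); nra.
  - rewrite RInt_abs_Derive_no_zero by (auto; intros z Hzab Hz0; apply Hnone; eauto).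
    pose proof (Rabs_triang (g b) (- g a)); rewrite Rabs_Ropp in *.
    pose proof (HM a ltac:(lra)); pose proof (HM b ltac:(lra)).
    unfold Rminus; nra.
Qed.

Section IntegrationByParts.

Variables (g g1 g2 c s : R -> R) (k : R).
Hypothesis g_derive : forall x, is_derive g x (g1 x).
Hypothesis g1_derive : forall x, is_derive g1 x (g2 x).
Hypothesis g2_continuous : forall x, continuous g2 x.
Hypothesis s_derive : forall x, is_derive s x (k * c x).
Hypothesis c_derive : forall x, is_derive c x (- k * s x).

Let c_continuous (x : R) : continuous c x :=
  ex_derive_continuous c x (ex_intro _ _ (c_derive x)).

Lemma RInt_by_parts_twice (a b : R) :
  k ^ 2 * RInt (fun x => g x * c x) a b =
  (k * g b * s b + g1 b * c b) - (k * g a * s a + g1 a * c a)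
  - RInt (fun x => g2 x * c x) a b.
Proof.
  assert (Hgc : forall x, continuous (fun x => g x * c x) x).
  { intros x; apply (continuous_mult g c); [|apply c_continuous].
    apply (ex_derive_continuous g); eexists; apply g_derive. }
  assert (Hg2c : forall x, continuous (fun x => g2 x * c x) x)
    by (intros; apply (continuous_mult g2 c); auto).
  set (F x := k * g x * s x + g1 x * c x).
  assert (HF : forall x, is_derive F x (k ^ 2 * (g x * c x) + g2 x * c x)).
  { intros x; unfold F; auto_derive.
    - repeat split; eexists; eauto.
    - rewrite (is_derive_unique (fun t : R => g t) x (g1 x)),
        (is_derive_unique (fun t : R => s t) x (k * c x)),
        (is_derive_unique (fun t : R => g1 t) x (g2 x)),
        (is_derive_unique (fun t : R => c t) x (- k * s x)) by auto.
      ring. }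
  assert (Hk2gc : forall x, continuous (fun x => k ^ 2 * (g x * c x)) x).
  { intros x; apply (continuous_mult (fun _ => k ^ 2) (fun x => g x * c x));
      [apply continuous_const | apply Hgc]. }
  assert (HFI := is_RInt_derive F _ a b (fun x _ => HF x)
    (fun x _ => continuous_plus _ _ x (Hk2gc x) (Hg2c x))).
  apply is_RInt_unique in HFI.
  rewrite (RInt_plus (V := R_CompleteNormedModule) (fun x => k ^ 2 * (g x * c x))) in HFI
    by now apply ex_RInt_R_continuous.
  rewrite (RInt_scal (V := R_CompleteNormedModule) (fun x => g x * c x)) in HFI
    by now apply ex_RInt_R_continuous.
  change (k ^ 2 * RInt (fun x => g x * c x) a b + RInt (fun x => g2 x * c x) a b
          = F b - F a) in HFI.
  unfold F in HFI; lra.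
Qed.

Hypothesis c_bounded : forall x, Rabs (c x) <= 1.
Hypothesis s_bounded : forall x, Rabs (s x) <= 1.

Lemma RInt_by_parts_twice_le (a b : R) : a <= b ->
  k ^ 2 * Rabs (RInt (fun x => g x * c x) a b) <=
  Rabs k * (Rabs (g a) + Rabs (g b)) + Rabs (g1 a) + Rabs (g1 b)
  + RInt (fun x => Rabs (g2 x)) a b.
Proof.
  intros Hab.
  assert (Hg2c : forall x, continuous (fun x => g2 x * c x) x)
    by (intros; apply (continuous_mult g2 c); auto).
  assert (Habs_c : forall u x, Rabs (u * c x) <= Rabs u).
  { intros u x; rewrite Rabs_mult; pose proof (Rabs_pos u); pose proof (c_bounded x); nra. }
  assert (Habs_s : forall u x, Rabs (u * s x) <= Rabs u).
  { intros u x; rewrite Rabs_mult; pose proof (Rabs_pos u); pose proof (s_bounded x); nra. }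
  assert (Hrem : Rabs (RInt (fun x => g2 x * c x) a b) <= RInt (fun x => Rabs (g2 x)) a b).
  { eapply Rle_trans; [apply abs_RInt_le; [exact Hab | now apply ex_RInt_R_continuous]|].
    apply RInt_le; [exact Hab | | | intros; apply Habs_c];
      apply ex_RInt_R_continuous; intros; now apply continuous_Rabs_comp. }
  replace (k ^ 2 * Rabs (RInt (fun x => g x * c x) a b))
    with (Rabs (k ^ 2 * RInt (fun x => g x * c x) a b))
    by (rewrite Rabs_mult, <- RPow_abs, pow2_abs; reflexivity).
  rewrite RInt_by_parts_twice.
  pose proof (Habs_s (k * g a) a); pose proof (Habs_s (k * g b) b).
  pose proof (Habs_c (g1 a) a); pose proof (Habs_c (g1 b) b).
  pose proof (Rabs_triang (k * g b * s b) (g1 b * c b)).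
  pose proof (Rabs_triang (k * g a * s a) (g1 a * c a)).
  pose proof (Rabs_triang (k * g b * s b + g1 b * c b) (- (k * g a * s a + g1 a * c a))).
  pose proof (Rabs_triang (k * g b * s b + g1 b * c b - (k * g a * s a + g1 a * c a))
                          (- RInt (fun x => g2 x * c x) a b)).
  rewrite !Rabs_Ropp, !(Rabs_mult k) in *.
  unfold Rminus in *; lra.
Qed.

End IntegrationByParts.

Lemma continuous_cos_mul (k x : R) : continuous (fun t => cos (k * t)) x.
Proof. apply (ex_derive_continuous (fun t => cos (k * t))); auto_derive; auto. Qed.

Lemma continuous_sin_mul (k x : R) : continuous (fun t => sin (k * t)) x.
Proof. apply (ex_derive_continuous (fun t => sin (k * t))); auto_derive; auto. Qed.

Lemma RInt_sym_sub (f : R -> R) (u v : R) : (forall x, continuous f x) ->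
  RInt f (- v) v - RInt f (- u) u = RInt f (- v) (- u) + RInt f u v.
Proof.
  intros Hf.
  assert (Hint : forall a b, ex_RInt f a b) by (intros; now apply ex_RInt_R_continuous).
  rewrite <- (RInt_Chasles (V := R_CompleteNormedModule) f (- v) (- u) v),
    <- (RInt_Chasles (V := R_CompleteNormedModule) f (- u) u v) by apply Hint.
  repeat change (plus ?x ?y) with (x + y); ring.
Qed.

Definition fourier_cos_sin_abs (g : R -> R) (k a b : R) : R :=
  Rabs (RInt (fun t => g t * cos (k * t)) a b) + Rabs (RInt (fun t => g t * sin (k * t)) a b).

Section TruncatedFourier.

Variables (g : R -> R) (k : R).
Hypothesis g_continuous : forall x, continuous g x.

Let gcos_continuous x : continuous (fun t => g t * cos (k * t)) x :=
  continuous_mult g (fun t => cos (k * t)) x (g_continuous x) (continuous_cos_mul k x).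
Let gsin_continuous x : continuous (fun t => g t * sin (k * t)) x :=
  continuous_mult g (fun t => sin (k * t)) x (g_continuous x) (continuous_sin_mul k x).

Lemma fourier_trunc_re_im (r : R) :
  fourier_trunc g k r =
  (RInt (fun t => g t * cos (k * t)) (- r) r, - RInt (fun t => g t * sin (k * t)) (- r) r).
Proof.
  apply (is_RInt_unique (V := C_R_CompleteNormedModule)).
  apply (is_RInt_ext (V := C_R_CompleteNormedModule)
           (fun t => (g t * cos (k * t), - (g t * sin (k * t))))).
  { intros x _; unfold expmi, Cmult; simpl; apply injective_projections; simpl; ring. }
  apply (is_RInt_fct_extend_pair (U := R_NormedModule) (V := R_NormedModule)); simpl.
  - now apply (RInt_correct (V := R_CompleteNormedModule)), ex_RInt_R_continuous.
  - rewrite <- (RInt_opp (V := R_CompleteNormedModule)) by now apply ex_RInt_R_continuous.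
    apply (RInt_correct (V := R_CompleteNormedModule)), ex_RInt_R_continuous.
    intros; now apply (continuous_opp (fun t => g t * sin (k * t))).
Qed.

Lemma Cmod_fourier_trunc_le (r : R) :
  Cmod (fourier_trunc g k r) <= fourier_cos_sin_abs g k (- r) r.
Proof.
  rewrite fourier_trunc_re_im; unfold fourier_cos_sin_abs.
  rewrite <- (Rabs_Ropp (RInt (fun t => g t * sin (k * t)) (- r) r)).
  apply Cmod_le_Rabs_plus.
Qed.

Lemma Cmod_fourier_trunc_sub_le (u v : R) :
  Cmod (fourier_trunc g k v - fourier_trunc g k u)
  <= fourier_cos_sin_abs g k (- v) (- u) + fourier_cos_sin_abs g k u v.
Proof.
  set (Ic a b := RInt (fun t => g t * cos (k * t)) a b).
  set (Is a b := RInt (fun t => g t * sin (k * t)) a b).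
  replace (fourier_trunc g k v - fourier_trunc g k u)%C
    with (Ic (- v) (- u) + Ic u v, - (Is (- v) (- u) + Is u v)).
  2: { rewrite !fourier_trunc_re_im; unfold Ic, Is; rewrite <- !RInt_sym_sub by auto.
       unfold Cminus, Cplus, Copp; simpl; apply injective_projections; simpl; ring. }
  eapply Rle_trans; [apply Cmod_le_Rabs_plus|].
  unfold fourier_cos_sin_abs; fold (Ic (- v) (- u)) (Ic u v) (Is (- v) (- u)) (Is u v).
  rewrite Rabs_Ropp.
  pose proof (Rabs_triang (Ic (- v) (- u)) (Ic u v)).
  pose proof (Rabs_triang (Is (- v) (- u)) (Is u v)).
  lra.
Qed.

End TruncatedFourier.

Definition is_C2 (g : R -> R) : Prop :=
  (forall x, ex_derive g x) /\ (forall x, ex_derive (Derive g) x) /\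
  (forall x, continuous (Derive (Derive g)) x).

Section FourierDecay.

Variables (g : R -> R) (k A : R) (N : nat).
Hypothesis k_neq0 : k <> 0.
Hypothesis g_C2 : is_C2 g.
Hypothesis g''_zeros : at_most_zeros N (Derive (Derive g)).
Hypothesis A_nonneg : 0 <= A.
Hypothesis g_decay : forall x, 1 < Rabs x -> Rabs (g x) <= A / Rabs x.

Let g_continuous (x : R) : continuous g x :=
  ex_derive_continuous g x (proj1 g_C2 x).

Let k2_pos : 0 < k ^ 2.
Proof. apply pow2_gt_0; exact k_neq0. Qed.

Let g_decay_far (u x : R) : 1 < u -> u <= Rabs x -> Rabs (g x) <= A / u.
Proof.
  intros Hu Hx; eapply Rle_trans; [apply g_decay; lra|].
  apply Rdiv_le_contravar; lra.
Qed.

Lemma fourier_cos_sin_abs_le (a b M : R) : a <= b ->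
  (forall x, a <= x <= b -> Rabs (Derive g x) <= M) ->
  k ^ 2 * fourier_cos_sin_abs g k a b <=
  2 * (Rabs k * (Rabs (g a) + Rabs (g b)) + Rabs (Derive g a) + Rabs (Derive g b)
       + 2 * (INR N + 1) * M).
Proof.
  intros Hab HM.
  destruct g_C2 as [Hd [Hd1 Hc2]].
  destruct (at_most_zeros_list N _ g''_zeros) as [l [Hl Hz]].
  assert (HM0 : 0 <= M) by (pose proof (Rabs_pos (Derive g a)); pose proof (HM a ltac:(lra)); lra).
  assert (Hvar : RInt (fun x => Rabs (Derive (Derive g) x)) a b <= 2 * (INR N + 1) * M).
  { eapply Rle_trans; [apply (RInt_abs_Derive_le_zeros (Derive g) M Hd1 Hc2 l); auto|].
    apply le_INR in Hl; nra. }
  assert (G0 : forall x, is_derive g x (Derive g x)) by (intros; now apply Derive_correct).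
  assert (G1 : forall x, is_derive (Derive g) x (Derive (Derive g) x))
    by (intros; now apply Derive_correct).
  assert (Hcos := RInt_by_parts_twice_le g (Derive g) (Derive (Derive g))
    (fun t => cos (k * t)) (fun t => sin (k * t)) k G0 G1 Hc2
    ltac:(intros; auto_derive; [auto | ring]) ltac:(intros; auto_derive; [auto | ring])
    ltac:(intros; apply Rabs_le, COS_bound) ltac:(intros; apply Rabs_le, SIN_bound) a b Hab).
  assert (Hsin := RInt_by_parts_twice_le g (Derive g) (Derive (Derive g))
    (fun t => sin (k * t)) (fun t => - cos (k * t)) k G0 G1 Hc2
    ltac:(intros; auto_derive; [auto | ring]) ltac:(intros; auto_derive; [auto | ring])
    ltac:(intros; apply Rabs_le, SIN_bound)
    ltac:(intros; cbv beta; rewrite Rabs_Ropp; apply Rabs_le, COS_bound) a b Hab).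
  unfold fourier_cos_sin_abs; lra.
Qed.

Lemma fourier_cos_sin_abs_far (A' u a b : R) : 0 <= A' ->
  (forall x, 1 < Rabs x -> Rabs (Derive g x) <= A' / Rabs x) ->
  1 < u -> a <= b -> (forall x, a <= x <= b -> u <= Rabs x) ->
  fourier_cos_sin_abs g k a b <= 4 * (Rabs k * A + (INR N + 2) * A') / k ^ 2 / u.
Proof.
  intros HA' Hg' Hu Hab Hx.
  assert (Hg'_far : forall x, a <= x <= b -> Rabs (Derive g x) <= A' / u).
  { intros x Hxab; eapply Rle_trans; [apply Hg'; pose proof (Hx x Hxab); lra|].
    apply Rdiv_le_contravar; [exact HA' | lra | now apply Hx]. }
  assert (Ha := g_decay_far u a Hu (Hx a ltac:(lra))).
  assert (Hb := g_decay_far u b Hu (Hx b ltac:(lra))).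
  assert (H'a := Hg'_far a ltac:(lra)); assert (H'b := Hg'_far b ltac:(lra)).
  apply (Rmult_le_reg_l (k ^ 2)); [exact k2_pos|].
  eapply Rle_trans; [apply (fourier_cos_sin_abs_le a b (A' / u) Hab Hg'_far)|].
  replace (k ^ 2 * (4 * (Rabs k * A + (INR N + 2) * A') / k ^ 2 / u))
    with (4 * Rabs k * (A / u) + 4 * (INR N + 2) * (A' / u)) by (field; lra).
  pose proof (Rabs_pos k); pose proof (pos_INR N).
  nra.
Qed.

Lemma ex_fourier_lim (A' : R) : 0 <= A' ->
  (forall x, 1 < Rabs x -> Rabs (Derive g x) <= A' / Rabs x) ->
  exists L, fourier_lim g k L.
Proof.
  intros HA' Hg'.
  set (K := 4 * (Rabs k * A + (INR N + 2) * A') / k ^ 2).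
  apply (ex_lim_p_infty_of_tail_bound (V := C_R_CompleteNormedModule) _ 1 (2 * K)).
  intros u v Hu Huv.
  rewrite norm_C_R.
  eapply Rle_trans; [now apply Cmod_fourier_trunc_sub_le|].
  assert (Hleft := fourier_cos_sin_abs_far A' u (- v) (- u) HA' Hg' Hu ltac:(lra)
    ltac:(intros x Hx; rewrite Rabs_left by lra; lra)).
  assert (Hright := fourier_cos_sin_abs_far A' u u v HA' Hg' Hu Huv
    ltac:(intros x Hx; rewrite Rabs_right by lra; lra)).
  fold K in Hleft, Hright.
  replace (2 * K / u) with (K / u + K / u) by (field; lra).
  lra.
Qed.

Lemma Cmod_fourier_lim_le (M : R) (L : C) :
  (forall x, Rabs (Derive g x) <= M) -> fourier_lim g k L ->
  Cmod L <= 4 * (INR N + 2) * M / k ^ 2.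
Proof.
  intros HM HL.
  rewrite <- norm_C_R.
  apply (norm_lim_p_infty_le _ L 1 (4 * Rabs k * A / k ^ 2) _ HL).
  intros r Hr; rewrite norm_C_R.
  eapply Rle_trans; [now apply Cmod_fourier_trunc_le|].
  assert (Ha : Rabs (g (- r)) <= A / r)
    by (apply g_decay_far; [lra | rewrite Rabs_Ropp, Rabs_right; lra]).
  assert (Hb : Rabs (g r) <= A / r) by (apply g_decay_far; [lra | rewrite Rabs_right; lra]).
  pose proof (HM (- r)); pose proof (HM r).
  apply (Rmult_le_reg_l (k ^ 2)); [exact k2_pos|].
  eapply Rle_trans; [apply (fourier_cos_sin_abs_le (- r) r M ltac:(lra)); auto|].
  replace (k ^ 2 * (4 * Rabs k * A / k ^ 2 / r + 4 * (INR N + 2) * M / k ^ 2))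
    with (4 * Rabs k * (A / r) + 4 * (INR N + 2) * M) by (field; lra).
  pose proof (Rabs_pos k).
  nra.
Qed.

End FourierDecay.

Lemma norm2_ge_l (x y : R) : Rabs x <= norm2 x y.
Proof. unfold norm2; rewrite <- sqrt_Rsqr_abs; apply sqrt_le_1_alt; unfold Rsqr; nra. Qed.

Lemma norm2_ge_r (x y : R) : Rabs y <= norm2 x y.
Proof. unfold norm2; rewrite <- sqrt_Rsqr_abs; apply sqrt_le_1_alt; unfold Rsqr; nra. Qed.

Lemma norm2_comm (x y : R) : norm2 x y = norm2 y x.
Proof. unfold norm2; f_equal; ring. Qed.

Lemma very_moderate_decrease2_swap (h : R -> R -> R) :
  very_moderate_decrease2 h -> very_moderate_decrease2 (fun x y => h y x).
Proof.
  intros [C [HC Hh]]; exists C; split; [exact HC|].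
  intros x y Hxy; rewrite norm2_comm in *; now apply Hh.
Qed.

Lemma moderate_decrease2_swap (h : R -> R -> R) :
  moderate_decrease2 h -> moderate_decrease2 (fun x y => h y x).
Proof.
  intros [C [HC Hh]]; exists C; split; [exact HC|].
  intros x y Hxy; rewrite norm2_comm in *; now apply Hh.
Qed.

Section Slices.

Variables (h : R -> R -> R) (A : R).
Hypothesis A_nonneg : 0 <= A.

Lemma very_moderate_decrease2_slice (x y : R) :
  (forall x y, norm2 x y > 1 -> Rabs (h x y) <= A / norm2 x y) ->
  1 < Rabs x -> Rabs (h x y) <= A / Rabs x.
Proof.
  intros Hh Hx; pose proof (norm2_ge_l x y).
  eapply Rle_trans; [apply Hh; lra|].
  apply Rdiv_le_contravar; lra.
Qed.

Lemma moderate_decrease2_slice (x y : R) :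
  (forall x y, norm2 x y > 1 -> Rabs (h x y) <= A / norm2 x y ^ 2) ->
  1 < Rabs x -> Rabs (h x y) <= A / Rabs x.
Proof.
  intros Hh Hx; pose proof (norm2_ge_l x y).
  eapply Rle_trans; [apply Hh; lra|].
  apply Rdiv_le_contravar; [exact A_nonneg | lra | nra].
Qed.

Lemma moderate_decrease2_slice_other (x y : R) :
  (forall x y, norm2 x y > 1 -> Rabs (h x y) <= A / norm2 x y ^ 2) ->
  1 < Rabs y -> Rabs (h x y) <= A / y ^ 2.
Proof.
  intros Hh Hy; pose proof (norm2_ge_r x y) as Hyn.
  eapply Rle_trans; [apply Hh; lra|].
  rewrite <- (pow2_abs y).
  apply Rdiv_le_contravar; [exact A_nonneg | nra |].
  apply pow_incr; split; [apply Rabs_pos | exact Hyn].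
Qed.

End Slices.

Lemma continuous_slice_l (f : R -> R -> R) (x y : R) :
  continuous (fun p : R * R => f (fst p) (snd p)) (x, y) -> continuous (fun t => f t y) x.
Proof.
  intros Hf.
  exact (continuous_comp_2 (fun t : R => t) (fun _ : R => y) f x
           (continuous_id x) (continuous_const y x) Hf).
Qed.

Lemma continuous_slice_r (f : R -> R -> R) (x y : R) :
  continuous (fun p : R * R => f (fst p) (snd p)) (x, y) -> continuous (fun t => f x t) y.
Proof.
  intros Hf.
  exact (continuous_comp_2 (fun _ : R => x) (fun t : R => t) f y
           (continuous_const x y) (continuous_id y) Hf).
Qed.

Lemma smooth2_C2_l (f : R -> R -> R) : smooth2 f -> forall y, is_C2 (fun x => f x y).
Proof.
  intros [S [Sf HS]] y.
  destruct (HS f Sf) as [_ [Hfx [_ [Sfx _]]]].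
  destruct (HS _ Sfx) as [_ [Hfxx [_ [Sfxx _]]]].
  destruct (HS _ Sfxx) as [Hcont _].
  split; [|split]; intros x; [apply Hfx | apply Hfxx |].
  exact (continuous_slice_l (fun a b => Derive (fun t => Derive (fun t0 => f t0 b) t) a) x y
           (Hcont x y)).
Qed.

Lemma smooth2_C2_r (f : R -> R -> R) : smooth2 f -> forall x, is_C2 (fun y => f x y).
Proof.
  intros [S [Sf HS]] x.
  destruct (HS f Sf) as [_ [_ [Hfy [_ Sfy]]]].
  destruct (HS _ Sfy) as [_ [_ [Hfyy [_ Sfyy]]]].
  destruct (HS _ Sfyy) as [Hcont _].
  split; [|split]; intros y; [apply Hfy | apply Hfyy |].
  exact (continuous_slice_r (fun a b => Derive (fun t => Derive (fun t0 => f a t0) t) b) x y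
           (Hcont x y)).
Qed.

Lemma fourier_slices_moderate_decrease (h : R -> R -> R) :
  (forall y, is_C2 (fun x => h x y)) ->
  very_moderate_decrease2 h -> moderate_decrease2 (partial_x h) ->
  (exists N : nat, forall y, at_most_zeros N (Derive_n (fun x => h x y) 2)) ->
  forall k, k <> 0 ->
    (forall y, exists L, fourier_lim (fun x => h x y) k L) /\
    (exists D, 0 < D /\ forall y L, Rabs y > 1 ->
       fourier_lim (fun x => h x y) k L -> Cmod L <= D / y ^ 2).
Proof.
  intros HC2 [A [HA Hh]] [A' [HA' Hh']] [N HN] k Hk.
  assert (Hdecay : forall y x, 1 < Rabs x -> Rabs (h x y) <= A / Rabs x)
    by (intros y x; exact (very_moderate_decrease2_slice h A (Rlt_le _ _ HA) x y Hh)).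
  split.
  - intros y; apply (ex_fourier_lim _ k A N Hk (HC2 y) (HN y) (Rlt_le _ _ HA) (Hdecay y) A');
      [lra | intros x; exact (moderate_decrease2_slice _ A' (Rlt_le _ _ HA') x y Hh')].
  - exists (4 * (INR N + 2) * A' / k ^ 2); split.
    { pose proof (pos_INR N); apply Rdiv_lt_0_compat; [nra | now apply pow2_gt_0]. }
    intros y L Hy HL.
    assert (Hy0 : y <> 0) by (intros ->; rewrite Rabs_R0 in Hy; lra).
    replace (4 * (INR N + 2) * A' / k ^ 2 / y ^ 2)
      with (4 * (INR N + 2) * (A' / y ^ 2) / k ^ 2) by (field; auto).
    apply (Cmod_fourier_lim_le _ k A N Hk (HC2 y) (HN y) (Rlt_le _ _ HA) (Hdecay y));
      [|exact HL].
    intros x; exact (moderate_decrease2_slice_other _ A' (Rlt_le _ _ HA') x y Hh' Hy).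
Qed.

Theorem lemma10 (f : R -> R -> R) (Hs : smooth2 f) (Hn : normal f) :
  (forall k1, k1 <> 0 ->
     (forall y, exists L, fourier_lim (fun x => f x y) k1 L) /\
     (exists D, 0 < D /\ forall y L, Rabs y > 1 ->
        fourier_lim (fun x => f x y) k1 L -> Cmod L <= D / y ^ 2)) /\
  (forall k2, k2 <> 0 ->
     (forall x, exists L, fourier_lim (fun y => f x y) k2 L) /\
     (exists D, 0 < D /\ forall x L, Rabs x > 1 ->
        fourier_lim (fun y => f x y) k2 L -> Cmod L <= D / x ^ 2)).
Proof.
  destruct Hn as [_ [_ [Hvmd [Hmdx [Hmdy [N HN]]]]]].
  split.
  - apply fourier_slices_moderate_decrease; [now apply smooth2_C2_l | exact Hvmd | exact Hmdx |].
    exists N; intros y; apply HN.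
  - apply (fourier_slices_moderate_decrease (fun y x => f x y));
      [now apply smooth2_C2_r | now apply very_moderate_decrease2_swap
      | now apply moderate_decrease2_swap |].
    exists N; intros x; apply HN.
Qed.
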